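(* Let $b>0$, $c$ be constants and $m\ge1$ an integer, and let $\phi(s)=\frac{\sqrt{b^2-s^2}}{b}+\sqrt{b^2-s^2}\int_0^s\frac{c\,t^{2m}}{(b^2-t^2)^{3/2}}dt$. On $\mathbb{R}^2\setminus\{0\}$ let $$\alpha=e^{\sigma}\sqrt{(y^1)^2+(y^2)^2},\quad \beta=\frac{b\,e^{\sigma}(x^2y^1-x^1y^2)}{\sqrt{(x^1)^2+(x^2)^2}},\quad \sigma=\Big(m-\frac12\Big)\ln[(x^1)^2+(x^2)^2].$$ Then $F=\alpha\phi(\beta/\alpha)$ is projectively flat and $\beta$ is not closed.
   Context: For a Riemannian metric $\alpha$ and a 1-form $\beta$, $\beta$ is closed if $d\beta=0$. The spray coefficients of a Finsler metric $F$ are $G^i=\frac14 g^{il}\{[F^2]_{x^ky^l}y^k-[F^2]_{x^l}\}$ with $g_{ij}=\frac12[F^2]_{y^iy^j}$. $F$ is projectively flat on an open $U\subset\mathbb{R}^n$ if $G^i=P(x,y)y^i$ in the standard coordinates of $U$ for some function $P$. *)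

From Stdlib Require Import Reals Lra ClassicalEpsilon.
Open Scope R_scope.

(* Functions of the 4 coordinates (x^1, x^2, y^1, y^2) of T(R^2). *)
Definition fn4 := R -> R -> R -> R -> R.

(* Partial derivative with respect to coordinate i
   (0 = x^1, 1 = x^2, 2 = y^1, 3 = y^2), chosen via classical epsilon
   as the (unique when it exists) limit of the difference quotient. *)
Definition D (i : nat) (f : fn4) : fn4 := fun a b c d =>
  epsilon (inhabits 0)
    (fun l => derivable_pt_lim
       (fun t => match i with
                 | O => f t b c d
                 | 1%nat => f a t c d
                 | 2%nat => f a b t d
                 | _ => f a b c t end)
       (match i with O => a | 1%nat => b | 2%nat => c | _ => d end) l).

Definition integral (f : R -> R) (a b : R) : R :=
  epsilon (inhabits 0)
    (fun v => exists pr : Riemann_integrable f a b, RiemannInt pr = v).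

Definition gF (F : fn4) (i j : nat) : fn4 :=
  fun x1 x2 y1 y2 =>
    / 2 * D (2 + i) (D (2 + j) (fun a b c d => (F a b c d) ^ 2)) x1 x2 y1 y2.

Definition gFinv (F : fn4) (i j : nat) : fn4 :=
  fun x1 x2 y1 y2 =>
    let g00 := gF F 0 0 x1 x2 y1 y2 in
    let g01 := gF F 0 1 x1 x2 y1 y2 in
    let g10 := gF F 1 0 x1 x2 y1 y2 in
    let g11 := gF F 1 1 x1 x2 y1 y2 in
    let det := g00 * g11 - g01 * g10 in
    match i, j with
    | O, O => g11 / det
    | O, _ => - g01 / det
    | _, O => - g10 / det
    | _, _ => g00 / det
    end.

Definition sprayV (F : fn4) (l : nat) : fn4 :=
  fun x1 x2 y1 y2 =>
    let L := fun a b c d => (F a b c d) ^ 2 in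
    D 0 (D (2 + l) L) x1 x2 y1 y2 * y1
    + D 1 (D (2 + l) L) x1 x2 y1 y2 * y2
    - D l L x1 x2 y1 y2.

Definition spray (F : fn4) (i : nat) : fn4 :=
  fun x1 x2 y1 y2 =>
    / 4 * (gFinv F i 0 x1 x2 y1 y2 * sprayV F 0 x1 x2 y1 y2
           + gFinv F i 1 x1 x2 y1 y2 * sprayV F 1 x1 x2 y1 y2).

Definition projectively_flat (U : R -> R -> R -> R -> Prop) (F : fn4) : Prop :=
  exists P : fn4, forall x1 x2 y1 y2, U x1 x2 y1 y2 ->
    spray F 0 x1 x2 y1 y2 = P x1 x2 y1 y2 * y1 /\
    spray F 1 x1 x2 y1 y2 = P x1 x2 y1 y2 * y2.

(* A 1-form beta = b_1(x) y^1 + b_2(x) y^2 on R^2 \ {0} is closed iff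
   d beta = (d b_2/dx^1 - d b_1/dx^2) dx^1 /\ dx^2 = 0, with b_i = beta_{y^i}. *)
Definition closed_form (beta : fn4) : Prop :=
  forall x1 x2 y1 y2, (x1, x2) <> (0, 0) ->
    D 0 (D 3 beta) x1 x2 y1 y2 = D 1 (D 2 beta) x1 x2 y1 y2.

Definition phi (b c : R) (m : nat) (s : R) : R :=
  sqrt (b ^ 2 - s ^ 2) / b
  + sqrt (b ^ 2 - s ^ 2)
    * integral (fun t => c * t ^ (2 * m) / Rpower (b ^ 2 - t ^ 2) (3 / 2)) 0 s.

Definition sigma (m : nat) (x1 x2 : R) : R :=
  (INR m - / 2) * ln (x1 ^ 2 + x2 ^ 2).

Definition alpha (m : nat) : fn4 := fun x1 x2 y1 y2 =>
  exp (sigma m x1 x2) * sqrt (y1 ^ 2 + y2 ^ 2).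

Definition beta (b : R) (m : nat) : fn4 := fun x1 x2 y1 y2 =>
  b * exp (sigma m x1 x2) * (x2 * y1 - x1 * y2) / sqrt (x1 ^ 2 + x2 ^ 2).

Definition Fmetric (b c : R) (m : nat) : fn4 := fun x1 x2 y1 y2 =>
  alpha m x1 x2 y1 y2 * phi b c m (beta b m x1 x2 y1 y2 / alpha m x1 x2 y1 y2).

Definition domainF (b : R) (m : nat) (x1 x2 y1 y2 : R) : Prop :=
  (x1, x2) <> (0, 0) /\ (y1, y2) <> (0, 0) /\
  Rabs (beta b m x1 x2 y1 y2 / alpha m x1 x2 y1 y2) < b.

(* Writing s = beta/alpha = b (x^2 y^1 - x^1 y^2) / (|x| |y|), one finds
   F = |x|^(2m-2) |x.y| K(s)  with  K(s) = 1 + b int_0^s c t^(2m) (b^2-t^2)^(-3/2) dt.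
   The domain |s| < b of F is the region x.y <> 0, on which F^2 = G^2 for the
   smooth function G = |x|^(2m-2) (x.y) K(s).  Projective flatness follows from
   Hamel's criterion: if G is homogeneous of degree one in y and satisfies
   G_{x^k y^l} y^k = G_{x^l}, then the spray of F is (G_{x^k} y^k / 2G) y. *)

From Pilot Require Import Defs.
From Stdlib Require Import Reals Lra Lia Nsatz ClassicalEpsilon.
From Coquelicot Require Import Coquelicot.
Open Scope R_scope.

Definition kron (i j : nat) : R := if Nat.eqb i j then 1 else 0.

Definition along {A : Type} (f : R -> R -> R -> R -> A) (i : nat)
  (x1 x2 y1 y2 t : R) : A :=
  f (x1 + t * kron i 0) (x2 + t * kron i 1) (y1 + t * kron i 2) (y2 + t * kron i 3).

Ltac at_origin := cbv beta; rewrite ?Rmult_0_l, ?Rplus_0_r.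

Lemma along_0 {A : Type} (f : R -> R -> R -> R -> A) (i : nat) (x1 x2 y1 y2 : R) :
  along f i x1 x2 y1 y2 0 = f x1 x2 y1 y2.
Proof. unfold along; at_origin; reflexivity. Qed.

Lemma locally_of_ball (x d : R) (P : R -> Prop) :
  0 < d -> (forall y, Rabs (y - x) < d -> P y) -> locally x P.
Proof. intros Hd H; exists (mkposreal d Hd); intros y Hy; exact (H y Hy). Qed.

Lemma is_derive_value (f : R -> R) (x l l' : R) :
  is_derive f x l' -> l' = l -> is_derive f x l.
Proof. now intros H <-. Qed.

Lemma is_derive_Rplus (f g : R -> R) (x df dg : R) :
  is_derive f x df -> is_derive g x dg -> is_derive (fun t => f t + g t) x (df + dg).
Proof. exact (is_derive_plus f g x df dg). Qed.

Lemma is_derive_Rcomp (H s : R -> R) (x s0 h ds : R) :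
  s x = s0 -> is_derive H s0 h -> is_derive s x ds ->
  is_derive (fun t => H (s t)) x (h * ds).
Proof.
  intros <- HH Hs. eapply is_derive_value; [exact (is_derive_comp H s x h ds HH Hs)|].
  cbv; ring.
Qed.

Lemma derivable_pt_lim_shift (g h : R -> R) (a l : R) :
  (forall t, h t = g (t - a)) -> is_derive g 0 l -> derivable_pt_lim h a l.
Proof.
  intros Hh Hg. apply is_derive_Reals.
  eapply is_derive_ext; [intros t; symmetry; apply Hh|].
  eapply is_derive_value; [apply (is_derive_Rcomp g (fun t => t - a) a 0 l 1)|].
  - ring.
  - exact Hg.
  - auto_derive; [exact I|ring].
  - ring.
Qed.

Lemma D_of_is_derive (i : nat) (f : fn4) (x1 x2 y1 y2 l : R) : (i <= 3)%nat ->
  is_derive (along f i x1 x2 y1 y2) 0 l -> Defs.D i f x1 x2 y1 y2 = l.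
Proof.
  intros Hi H. unfold Defs.D.
  match goal with |- epsilon _ ?P = _ => assert (HP : P l) end.
  { destruct i as [|[|[|[|i]]]]; try lia; cbv beta iota;
      (eapply derivable_pt_lim_shift; [|exact H]);
      intros t; unfold along, kron; simpl; f_equal; ring. }
  exact (uniqueness_limite _ _ _ _ (epsilon_spec (inhabits 0) _ (ex_intro _ l HP)) HP).
Qed.

Definition sq (F : fn4) : fn4 := fun x1 x2 y1 y2 => F x1 x2 y1 y2 ^ 2.

(* Linear algebra behind the criterion: if a 2x2 matrix g maps y to G a, then
   the vector adj(g) (2 c a) / (4 det g) -- the shape of the spray -- is
   parallel to y (also when det g = 0, as division by 0 is total). *)
Lemma adjugate_parallel (g00 g01 g10 g11 c a0 a1 G y1 y2 : R) :
  g00 * y1 + g01 * y2 = G * a0 -> g10 * y1 + g11 * y2 = G * a1 ->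
  let det := g00 * g11 - g01 * g10 in
  / 4 * (g11 / det * (2 * c * a0) + - g01 / det * (2 * c * a1)) * y2
  = / 4 * (- g10 / det * (2 * c * a0) + g00 / det * (2 * c * a1)) * y1.
Proof.
  intros row0 row1 det. apply Rminus_diag_uniq.
  transitivity (/ 4 * / det * (2 * c) *
    (a0 * (g10 * y1 + g11 * y2) - a1 * (g00 * y1 + g01 * y2))).
  - unfold Rdiv. ring.
  - rewrite row0, row1. ring.
Qed.

(* If, on W, [F^2 = G^2] for a smooth G that is homogeneous of degree one in y
   and satisfies Hamel's equations  G_{x^k y^l} y^k = G_{x^l},  then the spray
   of F is proportional to y:  g_{ij} y^j = G G_{y^i}  and
   [F^2]_{x^k y^l} y^k - [F^2]_{x^l} = 2 (G_{x^k} y^k) G_{y^l},  so that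
   G^i = (G_{x^k} y^k / 2G) y^i.  The derivatives of G are supplied as
   [dG i] (first partials) and [ddG k l] (partial of [dG l] in coordinate k). *)
Section HamelCriterion.

Variables (F G : fn4) (dG : nat -> fn4) (ddG : nat -> nat -> fn4)
  (W : R -> R -> R -> R -> Prop).

Hypothesis W_open : forall x1 x2 y1 y2 i, W x1 x2 y1 y2 -> (i <= 3)%nat ->
  locally 0 (along W i x1 x2 y1 y2).
Hypothesis F_sq : forall x1 x2 y1 y2, W x1 x2 y1 y2 ->
  F x1 x2 y1 y2 ^ 2 = G x1 x2 y1 y2 ^ 2.
Hypothesis dG_spec : forall x1 x2 y1 y2 i, W x1 x2 y1 y2 -> (i <= 3)%nat ->
  is_derive (along G i x1 x2 y1 y2) 0 (dG i x1 x2 y1 y2).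
Hypothesis ddG_spec : forall x1 x2 y1 y2 k j, W x1 x2 y1 y2 ->
  (k <= 3)%nat -> (j <= 1)%nat ->
  is_derive (along (dG (2 + j)) k x1 x2 y1 y2) 0 (ddG k (2 + j) x1 x2 y1 y2).
Hypothesis euler : forall x1 x2 y1 y2, W x1 x2 y1 y2 ->
  dG 2 x1 x2 y1 y2 * y1 + dG 3 x1 x2 y1 y2 * y2 = G x1 x2 y1 y2.
Hypothesis euler_y : forall x1 x2 y1 y2 i, W x1 x2 y1 y2 -> (i <= 1)%nat ->
  ddG (2 + i) 2 x1 x2 y1 y2 * y1 + ddG (2 + i) 3 x1 x2 y1 y2 * y2 = 0.
Hypothesis hamel : forall x1 x2 y1 y2 l, W x1 x2 y1 y2 -> (l <= 1)%nat ->
  ddG 0 (2 + l) x1 x2 y1 y2 * y1 + ddG 1 (2 + l) x1 x2 y1 y2 * y2 = dG l x1 x2 y1 y2.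

Lemma D_sq (x1 x2 y1 y2 : R) (i : nat) : W x1 x2 y1 y2 -> (i <= 3)%nat ->
  Defs.D i (sq F) x1 x2 y1 y2 = 2 * G x1 x2 y1 y2 * dG i x1 x2 y1 y2.
Proof.
  intros HW Hi. apply D_of_is_derive; [exact Hi|].
  apply (is_derive_ext_loc (fun t => along G i x1 x2 y1 y2 t ^ 2)).
  - generalize (W_open _ _ _ _ _ HW Hi). apply filter_imp.
    intros t Ht. symmetry. exact (F_sq _ _ _ _ Ht).
  - eapply is_derive_value; [apply (is_derive_pow _ 2), dG_spec; assumption|].
    rewrite along_0. simpl. ring.
Qed.

Lemma D2_sq (x1 x2 y1 y2 : R) (k j : nat) : W x1 x2 y1 y2 ->
  (k <= 3)%nat -> (j <= 1)%nat ->
  Defs.D k (Defs.D (2 + j) (sq F)) x1 x2 y1 y2 =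
  2 * (dG k x1 x2 y1 y2 * dG (2 + j) x1 x2 y1 y2
       + G x1 x2 y1 y2 * ddG k (2 + j) x1 x2 y1 y2).
Proof.
  intros HW Hk Hj. apply D_of_is_derive; [exact Hk|].
  apply (is_derive_ext_loc
    (fun t => 2 * along G k x1 x2 y1 y2 t * along (dG (2 + j)) k x1 x2 y1 y2 t)).
  - generalize (W_open _ _ _ _ _ HW Hk). apply filter_imp.
    intros t Ht. symmetry. apply D_sq; [exact Ht | lia].
  - eapply is_derive_value.
    + apply (Derive.is_derive_mult (fun t => 2 * along G k x1 x2 y1 y2 t)
                                    (along (dG (2 + j)) k x1 x2 y1 y2));
        [|apply ddG_spec; assumption].
      apply (is_derive_scal (along G k x1 x2 y1 y2) 0 2), dG_spec; assumption.
    + rewrite !along_0. ring.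
Qed.

Lemma gF_on_y (x1 x2 y1 y2 : R) (i : nat) : W x1 x2 y1 y2 -> (i <= 1)%nat ->
  gF F i 0 x1 x2 y1 y2 * y1 + gF F i 1 x1 x2 y1 y2 * y2
  = G x1 x2 y1 y2 * dG (2 + i) x1 x2 y1 y2.
Proof.
  intros HW Hi. unfold gF. fold (sq F).
  rewrite (D2_sq _ _ _ _ (2 + i) 0), (D2_sq _ _ _ _ (2 + i) 1) by (auto; lia).
  transitivity (dG (2 + i) x1 x2 y1 y2
                  * (dG 2 x1 x2 y1 y2 * y1 + dG 3 x1 x2 y1 y2 * y2)
                + G x1 x2 y1 y2
                  * (ddG (2 + i) 2 x1 x2 y1 y2 * y1 + ddG (2 + i) 3 x1 x2 y1 y2 * y2)).
  - simpl (2 + 0)%nat. simpl (2 + 1)%nat. field.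
  - rewrite (euler _ _ _ _ HW), (euler_y _ _ _ _ _ HW Hi). ring.
Qed.

(* By Hamel's equations, the bracket in the spray is parallel to G_y. *)
Lemma sprayV_eq (x1 x2 y1 y2 : R) (l : nat) : W x1 x2 y1 y2 -> (l <= 1)%nat ->
  sprayV F l x1 x2 y1 y2
  = 2 * (dG 0 x1 x2 y1 y2 * y1 + dG 1 x1 x2 y1 y2 * y2) * dG (2 + l) x1 x2 y1 y2.
Proof.
  intros HW Hl. unfold sprayV. fold (sq F).
  rewrite (D2_sq _ _ _ _ 0 l), (D2_sq _ _ _ _ 1 l), (D_sq _ _ _ _ l) by (auto; lia).
  rewrite <- (hamel _ _ _ _ _ HW Hl). ring.
Qed.

Lemma spray_parallel (x1 x2 y1 y2 : R) : W x1 x2 y1 y2 ->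
  spray F 0 x1 x2 y1 y2 * y2 = spray F 1 x1 x2 y1 y2 * y1.
Proof.
  intros HW. unfold spray, gFinv. cbv zeta.
  rewrite !sprayV_eq by (auto; lia).
  apply (adjugate_parallel _ _ _ _ _ _ _ (G x1 x2 y1 y2));
    [apply (gF_on_y _ _ _ _ 0) | apply (gF_on_y _ _ _ _ 1)]; auto.
Qed.

End HamelCriterion.

Lemma projectively_flat_of_parallel (U : R -> R -> R -> R -> Prop) (F : fn4) :
  (forall x1 x2 y1 y2, U x1 x2 y1 y2 ->
     (y1, y2) <> (0, 0) /\ spray F 0 x1 x2 y1 y2 * y2 = spray F 1 x1 x2 y1 y2 * y1) ->
  projectively_flat U F.
Proof.
  intros H.
  exists (fun x1 x2 y1 y2 => if Req_EM_T y1 0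
           then spray F 1 x1 x2 y1 y2 / y2 else spray F 0 x1 x2 y1 y2 / y1).
  intros x1 x2 y1 y2 HU. destruct (H _ _ _ _ HU) as [Hy Hp].
  destruct (Req_EM_T y1 0) as [->|Hy1].
  - assert (y2 <> 0) by (intros ->; apply Hy; reflexivity).
    split; [|field; assumption].
    rewrite Rmult_0_r in *. apply (Rmult_eq_reg_r y2); [lra|assumption].
  - split; [field; assumption|].
    apply (Rmult_eq_reg_r y1); [|assumption]. rewrite <- Hp. field. assumption.
Qed.

Definition nrm (a1 a2 : R) : R := sqrt (a1 * a1 + a2 * a2).

Lemma nrm_pos (a1 a2 : R) : 0 < a1 * a1 + a2 * a2 -> 0 < nrm a1 a2.
Proof. intros H; apply sqrt_lt_R0, H. Qed.

Lemma nrm_sq (a1 a2 : R) : nrm a1 a2 * nrm a1 a2 = a1 * a1 + a2 * a2.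
Proof. apply sqrt_sqrt; nra. Qed.

Lemma sum_sq_pos (a1 a2 : R) : (a1, a2) <> (0, 0) -> 0 < a1 * a1 + a2 * a2.
Proof.
  intros H. apply Rnot_le_lt. intros Hle. apply H.
  replace a1 with 0 by nra. replace a2 with 0 by nra. reflexivity.
Qed.

Lemma nonzero_of_dot (x1 x2 y1 y2 : R) : x1 * y1 + x2 * y2 <> 0 ->
  0 < x1 * x1 + x2 * x2 /\ 0 < y1 * y1 + y2 * y2.
Proof.
  intros H. split; apply sum_sq_pos; intros E; injection E; intros -> ->; apply H; ring.
Qed.

Lemma affine_nonzero_near (d0 a : R) : d0 <> 0 -> locally 0 (fun t => d0 + t * a <> 0).
Proof.
  intros H. assert (Ha : 0 < Rabs a + 1) by (pose proof (Rabs_pos a); lra).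
  apply (locally_of_ball _ (Rabs d0 / (Rabs a + 1))).
  - apply Rdiv_lt_0_compat; [apply Rabs_pos_lt|]; assumption.
  - intros t Ht E. rewrite Rminus_0_r in Ht.
    apply (Rmult_lt_compat_r (Rabs a + 1)) in Ht; [|exact Ha].
    unfold Rdiv in Ht. rewrite Rmult_assoc, Rinv_l in Ht by lra.
    replace d0 with (- (t * a)) in Ht by lra.
    rewrite Rabs_Ropp, Rabs_mult in Ht. pose proof (Rabs_pos t). nra.
Qed.

Lemma dot_nonzero_near (x1 x2 y1 y2 : R) (i : nat) :
  x1 * y1 + x2 * y2 <> 0 -> (i <= 3)%nat ->
  locally 0 (along (fun x1 x2 y1 y2 => x1 * y1 + x2 * y2 <> 0) i x1 x2 y1 y2).
Proof.
  intros H Hi. unfold along, kron.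
  destruct i as [|[|[|[|i]]]]; try lia; simpl;
    [ generalize (affine_nonzero_near _ y1 H) | generalize (affine_nonzero_near _ y2 H)
    | generalize (affine_nonzero_near _ x1 H) | generalize (affine_nonzero_near _ x2 H) ];
    apply filter_imp; intros t Ht E; apply Ht; rewrite <- E; ring.
Qed.

(* The ansatz  G = |x|^(2m-2) (x.y) K(s),  s = b (x^2 y^1 - x^1 y^2) / (|x| |y|),
   satisfies Hamel's equations as soon as K solves the ODE
   s K''(s) (b^2 - s^2) = K'(s) (2m (b^2 - s^2) + 3 s^2)  on (-b, b). *)
Section HamelAnsatz.

Variables (b : R) (m : nat) (K K' K'' : R -> R).
Hypothesis hb : 0 < b.
Hypothesis hm : (1 <= m)%nat.
Hypothesis K_deriv : forall u, Rabs u < b -> is_derive K u (K' u).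
Hypothesis K'_deriv : forall u, Rabs u < b -> is_derive K' u (K'' u).
Hypothesis K_ode : forall u, Rabs u < b ->
  u * K'' u * (b * b - u * u) = K' u * (2 * INR m * (b * b - u * u) + 3 * (u * u)).

Definition conf (x1 x2 : R) : R := (x1 * x1 + x2 * x2) ^ (m - 1).

Definition scale (x1 x2 y1 y2 : R) : R := b * / nrm x1 x2 * / nrm y1 y2.

(* The ratio s = beta / alpha. *)
Definition ratio (x1 x2 y1 y2 : R) : R := scale x1 x2 y1 y2 * (x2 * y1 - x1 * y2).

Definition ansatz (x1 x2 y1 y2 : R) : R :=
  conf x1 x2 * (x1 * y1 + x2 * y2) * K (ratio x1 x2 y1 y2).

(* |s| < b exactly where x.y <> 0, since by Lagrange's identity
   s^2 |x|^2 |y|^2 = b^2 (|x|^2 |y|^2 - (x.y)^2). *)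
Lemma ratio_bound (x1 x2 y1 y2 : R) :
  0 < x1 * x1 + x2 * x2 -> 0 < y1 * y1 + y2 * y2 ->
  (Rabs (ratio x1 x2 y1 y2) < b <-> x1 * y1 + x2 * y2 <> 0).
Proof.
  intros Hx Hy.
  pose proof (nrm_pos _ _ Hx). pose proof (nrm_pos _ _ Hy).
  set (s := ratio x1 x2 y1 y2). set (N := (x1 * x1 + x2 * x2) * (y1 * y1 + y2 * y2)).
  assert (HN : 0 < N) by (apply Rmult_lt_0_compat; assumption).
  assert (Hs : s * s * N = b * b * (N - (x1 * y1 + x2 * y2) * (x1 * y1 + x2 * y2))).
  { unfold s, N, ratio, scale.
    replace ((x1 * y1 + x2 * y2) * (x1 * y1 + x2 * y2))
      with ((x1 * x1 + x2 * x2) * (y1 * y1 + y2 * y2) - (x2 * y1 - x1 * y2) ^ 2) by ring.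
    rewrite <- (nrm_sq x1 x2), <- (nrm_sq y1 y2). field. lra. }
  split.
  - intros Hlt Hd. rewrite Hd, Rmult_0_l, Rminus_0_r in Hs.
    assert (s * s = b * b) by (apply (Rmult_eq_reg_r N); lra).
    apply Rabs_def2 in Hlt. nra.
  - intros Hd. assert (0 < (x1 * y1 + x2 * y2) * (x1 * y1 + x2 * y2))
      by (apply Rsqr_pos_lt in Hd; exact Hd).
    assert (s * s < b * b).
    { apply (Rmult_lt_reg_r N); [exact HN|]. rewrite Hs.
      apply Rmult_lt_compat_l; [nra | lra]. }
    rewrite <- (Rabs_pos_eq b) by lra. apply Rsqr_lt_abs_0. unfold Rsqr. lra.
Qed.

Definition dconf (x1 x2 v1 v2 : R) : R :=
  2 * INR (m - 1) * (x1 * v1 + x2 * v2) * conf x1 x2 * / nrm x1 x2 * / nrm x1 x2.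

Definition dscale (x1 x2 y1 y2 v1 v2 v3 v4 : R) : R :=
  - scale x1 x2 y1 y2 * ((x1 * v1 + x2 * v2) * / nrm x1 x2 * / nrm x1 x2
                         + (y1 * v3 + y2 * v4) * / nrm y1 y2 * / nrm y1 y2).

Definition dratio (x1 x2 y1 y2 v1 v2 v3 v4 : R) : R :=
  dscale x1 x2 y1 y2 v1 v2 v3 v4 * (x2 * y1 - x1 * y2)
  + scale x1 x2 y1 y2 * (v2 * y1 + x2 * v3 - v1 * y2 - x1 * v4).

Definition dansatz (x1 x2 y1 y2 v1 v2 v3 v4 : R) : R :=
  let s := ratio x1 x2 y1 y2 in
  dconf x1 x2 v1 v2 * (x1 * y1 + x2 * y2) * K s
  + conf x1 x2 * (v1 * y1 + x1 * v3 + (v2 * y2 + x2 * v4)) * K s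
  + conf x1 x2 * (x1 * y1 + x2 * y2) * (K' s * dratio x1 x2 y1 y2 v1 v2 v3 v4).

Lemma conf_derive (x1 x2 v1 v2 : R) : 0 < x1 * x1 + x2 * x2 ->
  is_derive (fun t => conf (x1 + t * v1) (x2 + t * v2)) 0 (dconf x1 x2 v1 v2).
Proof.
  intros H. pose proof (nrm_pos _ _ H). pose proof (nrm_sq x1 x2).
  unfold dconf, conf. auto_derive; [exact I|]. at_origin.
  destruct (m - 1)%nat as [|k]; [simpl; ring|].
  rewrite S_INR. simpl Init.Nat.pred. simpl pow. rewrite <- H1. field. lra.
Qed.

Lemma scale_derive (x1 x2 y1 y2 v1 v2 v3 v4 : R) :
  0 < x1 * x1 + x2 * x2 -> 0 < y1 * y1 + y2 * y2 ->
  is_derive (fun t => scale (x1 + t * v1) (x2 + t * v2) (y1 + t * v3) (y2 + t * v4)) 0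
    (dscale x1 x2 y1 y2 v1 v2 v3 v4).
Proof.
  intros Hx Hy. pose proof (nrm_pos _ _ Hx). pose proof (nrm_pos _ _ Hy).
  unfold dscale, scale, nrm in *. auto_derive; at_origin.
  - repeat split; lra.
  - field. lra.
Qed.

Lemma ratio_derive (x1 x2 y1 y2 v1 v2 v3 v4 : R) :
  0 < x1 * x1 + x2 * x2 -> 0 < y1 * y1 + y2 * y2 ->
  is_derive (fun t => ratio (x1 + t * v1) (x2 + t * v2) (y1 + t * v3) (y2 + t * v4)) 0
    (dratio x1 x2 y1 y2 v1 v2 v3 v4).
Proof.
  intros Hx Hy. eapply is_derive_value.
  - apply (Derive.is_derive_mult
      (fun t => scale (x1 + t * v1) (x2 + t * v2) (y1 + t * v3) (y2 + t * v4))
      (fun t => (x2 + t * v2) * (y1 + t * v3) - (x1 + t * v1) * (y2 + t * v4))).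
    + apply scale_derive; assumption.
    + auto_derive; [exact I | reflexivity].
  - unfold dratio. at_origin. ring.
Qed.

Lemma ansatz_derive (x1 x2 y1 y2 v1 v2 v3 v4 : R) : x1 * y1 + x2 * y2 <> 0 ->
  is_derive (fun t => ansatz (x1 + t * v1) (x2 + t * v2) (y1 + t * v3) (y2 + t * v4)) 0
    (dansatz x1 x2 y1 y2 v1 v2 v3 v4).
Proof.
  intros Hd. destruct (nonzero_of_dot _ _ _ _ Hd) as [Hx Hy].
  pose proof (proj2 (ratio_bound _ _ _ _ Hx Hy) Hd) as Hs.
  eapply is_derive_value.
  - apply (Derive.is_derive_mult
      (fun t => conf (x1 + t * v1) (x2 + t * v2)
                * ((x1 + t * v1) * (y1 + t * v3) + (x2 + t * v2) * (y2 + t * v4)))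
      (fun t => K (ratio (x1 + t * v1) (x2 + t * v2) (y1 + t * v3) (y2 + t * v4)))).
    + apply Derive.is_derive_mult; [apply conf_derive; assumption|].
      auto_derive; [exact I | reflexivity].
    + apply (is_derive_Rcomp _ _ _ (ratio x1 x2 y1 y2)); [at_origin; reflexivity| |].
      * apply K_deriv, Hs.
      * apply ratio_derive; assumption.
  - unfold dansatz. at_origin. ring.
Qed.

(* The y-partials  s_y . u  and  G_y . u  of s and G in the y-direction u,
   as functions of the point. *)
Definition ratio_y_factor (u3 u4 x1 x2 y1 y2 : R) : R :=
  x2 * u3 - x1 * u4 - (x2 * y1 - x1 * y2) * (y1 * u3 + y2 * u4) * / nrm y1 y2 * / nrm y1 y2.

Definition ratio_y (u3 u4 x1 x2 y1 y2 : R) : R :=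
  scale x1 x2 y1 y2 * ratio_y_factor u3 u4 x1 x2 y1 y2.

Definition ansatz_y (u3 u4 x1 x2 y1 y2 : R) : R :=
  let s := ratio x1 x2 y1 y2 in
  conf x1 x2 * (x1 * u3 + x2 * u4) * K s
  + conf x1 x2 * (x1 * y1 + x2 * y2) * K' s * ratio_y u3 u4 x1 x2 y1 y2.

Lemma dansatz_y_eq (x1 x2 y1 y2 u3 u4 : R) :
  dansatz x1 x2 y1 y2 0 0 u3 u4 = ansatz_y u3 u4 x1 x2 y1 y2.
Proof. unfold dansatz, ansatz_y, dconf, dratio, dscale, ratio_y, ratio_y_factor. ring. Qed.

Definition dratio_y_factor (u3 u4 x1 x2 y1 y2 v1 v2 v3 v4 : R) : R :=
  v2 * u3 - v1 * u4
  - ((v2 * y1 + x2 * v3 - v1 * y2 - x1 * v4) * (y1 * u3 + y2 * u4) * / nrm y1 y2 * / nrm y1 y2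
     + (x2 * y1 - x1 * y2) * (v3 * u3 + v4 * u4) * / nrm y1 y2 * / nrm y1 y2
     - 2 * (x2 * y1 - x1 * y2) * (y1 * u3 + y2 * u4) * (y1 * v3 + y2 * v4)
         * / nrm y1 y2 * / nrm y1 y2 * / nrm y1 y2 * / nrm y1 y2).

Definition dratio_y (u3 u4 x1 x2 y1 y2 v1 v2 v3 v4 : R) : R :=
  dscale x1 x2 y1 y2 v1 v2 v3 v4 * ratio_y_factor u3 u4 x1 x2 y1 y2
  + scale x1 x2 y1 y2 * dratio_y_factor u3 u4 x1 x2 y1 y2 v1 v2 v3 v4.

Definition dansatz_y (u3 u4 x1 x2 y1 y2 v1 v2 v3 v4 : R) : R :=
  let s := ratio x1 x2 y1 y2 in
  let ds := dratio x1 x2 y1 y2 v1 v2 v3 v4 in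
  (dconf x1 x2 v1 v2 * (x1 * u3 + x2 * u4) + conf x1 x2 * (v1 * u3 + v2 * u4)) * K s
  + conf x1 x2 * (x1 * u3 + x2 * u4) * (K' s * ds)
  + ((dconf x1 x2 v1 v2 * (x1 * y1 + x2 * y2)
      + conf x1 x2 * (v1 * y1 + x1 * v3 + (v2 * y2 + x2 * v4))) * K' s
     + conf x1 x2 * (x1 * y1 + x2 * y2) * (K'' s * ds)) * ratio_y u3 u4 x1 x2 y1 y2
  + conf x1 x2 * (x1 * y1 + x2 * y2) * K' s * dratio_y u3 u4 x1 x2 y1 y2 v1 v2 v3 v4.

Lemma ratio_y_factor_derive (u3 u4 x1 x2 y1 y2 v1 v2 v3 v4 : R) :
  0 < y1 * y1 + y2 * y2 ->
  is_derive (fun t => ratio_y_factor u3 u4 (x1 + t * v1) (x2 + t * v2)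
                                           (y1 + t * v3) (y2 + t * v4)) 0
    (dratio_y_factor u3 u4 x1 x2 y1 y2 v1 v2 v3 v4).
Proof.
  intros Hy. pose proof (nrm_pos _ _ Hy).
  unfold ratio_y_factor, dratio_y_factor, nrm in *. auto_derive; at_origin.
  - repeat split; lra.
  - field. lra.
Qed.

Lemma ratio_y_derive (u3 u4 x1 x2 y1 y2 v1 v2 v3 v4 : R) :
  0 < x1 * x1 + x2 * x2 -> 0 < y1 * y1 + y2 * y2 ->
  is_derive (fun t => ratio_y u3 u4 (x1 + t * v1) (x2 + t * v2) (y1 + t * v3) (y2 + t * v4)) 0
    (dratio_y u3 u4 x1 x2 y1 y2 v1 v2 v3 v4).
Proof.
  intros Hx Hy. eapply is_derive_value.
  - apply (Derive.is_derive_mult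
      (fun t => scale (x1 + t * v1) (x2 + t * v2) (y1 + t * v3) (y2 + t * v4))
      (fun t => ratio_y_factor u3 u4 (x1 + t * v1) (x2 + t * v2) (y1 + t * v3) (y2 + t * v4))).
    + apply scale_derive; assumption.
    + apply ratio_y_factor_derive; assumption.
  - unfold dratio_y. at_origin. reflexivity.
Qed.

Lemma ansatz_y_derive (u3 u4 x1 x2 y1 y2 v1 v2 v3 v4 : R) : x1 * y1 + x2 * y2 <> 0 ->
  is_derive (fun t => ansatz_y u3 u4 (x1 + t * v1) (x2 + t * v2) (y1 + t * v3) (y2 + t * v4)) 0
    (dansatz_y u3 u4 x1 x2 y1 y2 v1 v2 v3 v4).
Proof.
  intros Hd. destruct (nonzero_of_dot _ _ _ _ Hd) as [Hx Hy].
  pose proof (proj2 (ratio_bound _ _ _ _ Hx Hy) Hd) as Hs.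
  set (x1t := fun t => x1 + t * v1). set (x2t := fun t => x2 + t * v2).
  set (y1t := fun t => y1 + t * v3). set (y2t := fun t => y2 + t * v4).
  eapply is_derive_value.
  - apply (is_derive_Rplus
      (fun t => conf (x1t t) (x2t t) * (x1t t * u3 + x2t t * u4)
                * K (ratio (x1t t) (x2t t) (y1t t) (y2t t)))
      (fun t => conf (x1t t) (x2t t) * (x1t t * y1t t + x2t t * y2t t)
                * K' (ratio (x1t t) (x2t t) (y1t t) (y2t t))
                * ratio_y u3 u4 (x1t t) (x2t t) (y1t t) (y2t t))).
    + apply Derive.is_derive_mult.
      * apply Derive.is_derive_mult; [apply conf_derive; assumption|].
        unfold x1t, x2t. auto_derive; [exact I | reflexivity].
      * apply (is_derive_Rcomp _ _ _ (ratio x1 x2 y1 y2));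
          [unfold x1t, x2t, y1t, y2t; at_origin; reflexivity | apply K_deriv, Hs |].
        apply ratio_derive; assumption.
    + apply Derive.is_derive_mult; [apply Derive.is_derive_mult|].
      * apply Derive.is_derive_mult; [apply conf_derive; assumption|].
        unfold x1t, x2t, y1t, y2t. auto_derive; [exact I | reflexivity].
      * apply (is_derive_Rcomp _ _ _ (ratio x1 x2 y1 y2));
          [unfold x1t, x2t, y1t, y2t; at_origin; reflexivity | apply K'_deriv, Hs |].
        apply ratio_derive; assumption.
      * apply ratio_y_derive; assumption.
  - unfold dansatz_y, x1t, x2t, y1t, y2t. at_origin. ring.
Qed.

Definition dA (i : nat) (x1 x2 y1 y2 : R) : R :=
  dansatz x1 x2 y1 y2 (kron i 0) (kron i 1) (kron i 2) (kron i 3).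

Definition ddA (k j : nat) (x1 x2 y1 y2 : R) : R :=
  dansatz_y (kron j 2) (kron j 3) x1 x2 y1 y2 (kron k 0) (kron k 1) (kron k 2) (kron k 3).

Lemma dA_spec (x1 x2 y1 y2 : R) (i : nat) : x1 * y1 + x2 * y2 <> 0 ->
  is_derive (along ansatz i x1 x2 y1 y2) 0 (dA i x1 x2 y1 y2).
Proof. intros Hd. apply ansatz_derive, Hd. Qed.

Lemma ddA_spec (x1 x2 y1 y2 : R) (k j : nat) : x1 * y1 + x2 * y2 <> 0 ->
  is_derive (along (dA (2 + j)) k x1 x2 y1 y2) 0 (ddA k (2 + j) x1 x2 y1 y2).
Proof.
  intros Hd. eapply is_derive_ext; [|apply ansatz_y_derive, Hd].
  intros t. unfold along, dA. change (kron (2 + j) 0) with 0. change (kron (2 + j) 1) with 0.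
  symmetry. apply dansatz_y_eq.
Qed.

Lemma ansatz_relations (x1 x2 y1 y2 : R) : x1 * y1 + x2 * y2 <> 0 ->
  nrm x1 x2 * nrm x1 x2 = x1 * x1 + x2 * x2 /\ nrm y1 y2 * nrm y1 y2 = y1 * y1 + y2 * y2 /\
  nrm x1 x2 * / nrm x1 x2 = 1 /\ nrm y1 y2 * / nrm y1 y2 = 1 /\
  INR m = INR (m - 1) + 1 /\
  ratio x1 x2 y1 y2 * K'' (ratio x1 x2 y1 y2)
    * (b * b - ratio x1 x2 y1 y2 * ratio x1 x2 y1 y2)
  = K' (ratio x1 x2 y1 y2) * (2 * INR m * (b * b - ratio x1 x2 y1 y2 * ratio x1 x2 y1 y2)
                              + 3 * (ratio x1 x2 y1 y2 * ratio x1 x2 y1 y2)).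
Proof.
  intros Hd. destruct (nonzero_of_dot _ _ _ _ Hd) as [Hx Hy].
  pose proof (nrm_pos _ _ Hx). pose proof (nrm_pos _ _ Hy).
  repeat split; try apply nrm_sq; try (field; lra).
  - rewrite <- S_INR. f_equal. lia.
  - apply K_ode, (ratio_bound _ _ _ _ Hx Hy), Hd.
Qed.

(* Every identity below is a polynomial consequence of these relations. *)
Ltac ansatz_algebra Hd :=
  destruct (ansatz_relations _ _ _ _ Hd) as (? & ? & ? & ? & ? & ?);
  unfold dA, ddA, kron; simpl Nat.eqb; cbv iota;
  unfold ansatz, dansatz_y, dansatz, dratio_y, dratio_y_factor, ratio_y, ratio_y_factor,
    dratio, dscale, dconf, ratio, scale in *;
  nsatz.

Lemma ansatz_euler (x1 x2 y1 y2 : R) : x1 * y1 + x2 * y2 <> 0 ->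
  dA 2 x1 x2 y1 y2 * y1 + dA 3 x1 x2 y1 y2 * y2 = ansatz x1 x2 y1 y2.
Proof. intros Hd. ansatz_algebra Hd. Qed.

Lemma ansatz_euler_y (x1 x2 y1 y2 : R) (i : nat) : x1 * y1 + x2 * y2 <> 0 -> (i <= 1)%nat ->
  ddA (2 + i) 2 x1 x2 y1 y2 * y1 + ddA (2 + i) 3 x1 x2 y1 y2 * y2 = 0.
Proof. intros Hd Hi. destruct i as [|[|i]]; [ansatz_algebra Hd | ansatz_algebra Hd | lia]. Qed.

(* Hamel's equations, where the ODE for K is used. *)
Lemma ansatz_hamel (x1 x2 y1 y2 : R) (l : nat) : x1 * y1 + x2 * y2 <> 0 -> (l <= 1)%nat ->
  ddA 0 (2 + l) x1 x2 y1 y2 * y1 + ddA 1 (2 + l) x1 x2 y1 y2 * y2 = dA l x1 x2 y1 y2.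
Proof. intros Hd Hl. destruct l as [|[|l]]; [ansatz_algebra Hd | ansatz_algebra Hd | lia]. Qed.

Lemma ansatz_spray_parallel (F : fn4) :
  (forall x1 x2 y1 y2, x1 * y1 + x2 * y2 <> 0 -> F x1 x2 y1 y2 ^ 2 = ansatz x1 x2 y1 y2 ^ 2) ->
  forall x1 x2 y1 y2, x1 * y1 + x2 * y2 <> 0 ->
  spray F 0 x1 x2 y1 y2 * y2 = spray F 1 x1 x2 y1 y2 * y1.
Proof.
  intros HF.
  apply (spray_parallel F ansatz dA ddA (fun x1 x2 y1 y2 => x1 * y1 + x2 * y2 <> 0));
    intros; auto using dot_nonzero_near, dA_spec, ddA_spec, ansatz_euler, ansatz_euler_y,
      ansatz_hamel.
Qed.

End HamelAnsatz.

Section Profile.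

Variables (b c : R) (m : nat).
Hypothesis hm : (1 <= m)%nat.

(* The integrand as written in phi, and the same function with the power 3/2
   expressed through sqrt, which is easier to differentiate. *)
Definition integrand (t : R) : R := c * t ^ (2 * m) / Rpower (b ^ 2 - t ^ 2) (3 / 2).

Definition kernel (t : R) : R :=
  c * t ^ (2 * m) / ((b * b - t * t) * sqrt (b * b - t * t)).

Definition profile (u : R) : R := 1 + b * integral integrand 0 u.
Definition profile' (u : R) : R := b * kernel u.
Definition profile'' (u : R) : R :=
  b * c * u ^ (2 * m - 1) * (2 * INR m * (b * b - u * u) + 3 * (u * u))
  / ((b * b - u * u) * (b * b - u * u) * sqrt (b * b - u * u)).

Lemma gap_pos (t : R) : Rabs t < b -> 0 < b * b - t * t.
Proof. intros H. apply Rabs_def2 in H. nra. Qed.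

Lemma between_in_interval (u z : R) : Rabs u < b -> Rmin 0 u <= z <= Rmax 0 u -> Rabs z < b.
Proof.
  intros Hu Hz. apply Rabs_def2 in Hu. apply Rabs_def1.
  - assert (Rmax 0 u < b) by (apply Rmax_lub_lt; lra). lra.
  - assert (- b < Rmin 0 u) by (apply Rmin_glb_lt; lra). lra.
Qed.

Lemma integrand_kernel (t : R) : Rabs t < b -> integrand t = kernel t.
Proof.
  intros H. pose proof (gap_pos t H).
  unfold integrand, kernel. replace (b ^ 2 - t ^ 2) with (b * b - t * t) by ring.
  replace (3 / 2) with (1 + / 2) by field.
  rewrite Rpower_plus, Rpower_1, Rpower_sqrt by lra. reflexivity.
Qed.

Lemma kernel_derivable (t : R) : Rabs t < b -> ex_derive kernel t.
Proof.
  intros H. pose proof (gap_pos t H). pose proof (sqrt_lt_R0 _ H0).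
  unfold kernel. auto_derive.
  replace (b * b + - (t * t)) with (b * b - t * t) by ring.
  repeat split; try lra. apply Rgt_not_eq, Rmult_lt_0_compat; lra.
Qed.

Lemma ex_RInt_kernel (u : R) : Rabs u < b -> ex_RInt kernel 0 u.
Proof.
  intros H. apply (@ex_RInt_continuous R_CompleteNormedModule). intros z Hz.
  apply (@ex_derive_continuous R_AbsRing R_NormedModule), kernel_derivable.
  exact (between_in_interval u z H Hz).
Qed.

Lemma integral_RInt (u : R) : Rabs u < b -> integral integrand 0 u = RInt kernel 0 u.
Proof.
  intros H.
  assert (Hext : forall z, Rmin 0 u < z < Rmax 0 u -> kernel z = integrand z).
  { intros z Hz. symmetry. apply integrand_kernel, (between_in_interval u); lra. }
  assert (HI : ex_RInt integrand 0 u) by (eapply ex_RInt_ext; [exact Hext | apply ex_RInt_kernel, H]).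
  pose proof (ex_RInt_Reals_0 _ _ _ HI) as pr.
  unfold integral.
  destruct (epsilon_spec (inhabits 0)
              (fun v => exists pr : Riemann_integrable integrand 0 u, RiemannInt pr = v)
              (ex_intro _ (RiemannInt pr) (ex_intro _ pr eq_refl))) as [pr' <-].
  rewrite <- RInt_Reals. symmetry. apply RInt_ext, Hext.
Qed.

Lemma profile_derive (u : R) : Rabs u < b -> is_derive profile u (profile' u).
Proof.
  intros H. set (d := b - Rabs u). assert (Hd : 0 < d) by (unfold d; lra).
  assert (Hnear : forall y, Rabs (y - u) < d -> Rabs y < b).
  { intros y Hy. unfold d in Hy. pose proof (Rabs_triang (y - u) u).
    replace (y - u + u) with y in * by ring. lra. }
  apply (is_derive_ext_loc (fun t => 1 + b * RInt kernel 0 t)).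
  - apply (locally_of_ball _ d _ Hd). intros y Hy.
    unfold profile. rewrite integral_RInt by (apply Hnear, Hy). reflexivity.
  - unfold profile'. auto_derive; [|ring].
    split; [apply ex_RInt_kernel, H|]. split; [|exact I].
    apply (locally_of_ball _ d _ Hd). intros y Hy.
    apply derivable_continuous_pt, ex_derive_Reals_0, kernel_derivable, Hnear, Hy.
Qed.

Lemma pow_pred (u : R) : u ^ (2 * m) = u * u ^ (2 * m - 1).
Proof. replace (2 * m)%nat with (S (2 * m - 1)) at 1 by lia. reflexivity. Qed.

Lemma profile'_derive (u : R) : Rabs u < b -> is_derive profile' u (profile'' u).
Proof.
  intros H. pose proof (gap_pos u H) as Hp. pose proof (sqrt_lt_R0 _ Hp) as Hs.
  unfold profile', profile'', kernel. auto_derive.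
  - replace (b * b + - (u * u)) with (b * b - u * u) by ring.
    repeat split; try lra. apply Rgt_not_eq, Rmult_lt_0_compat; lra.
  - replace (b * b + - (u * u)) with (b * b - u * u) by ring.
    change (m + (m + 0))%nat with (2 * m)%nat.
    replace (Init.Nat.pred (2 * m)) with (2 * m - 1)%nat by lia.
    rewrite pow_pred, mult_INR. simpl (INR 2).
    set (g := b * b - u * u) in *. set (S := sqrt g) in *.
    assert (HS : g = S * S) by (unfold S; rewrite sqrt_sqrt; lra).
    clearbody S g. rewrite HS. field. lra.
Qed.

Lemma profile_ode (u : R) : Rabs u < b ->
  u * profile'' u * (b * b - u * u)
  = profile' u * (2 * INR m * (b * b - u * u) + 3 * (u * u)).
Proof.
  intros H. pose proof (gap_pos u H) as Hp. pose proof (sqrt_lt_R0 _ Hp) as Hs.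
  unfold profile', profile'', kernel. rewrite pow_pred. field. lra.
Qed.

End Profile.

Section Metric.

Variables (b c : R) (m : nat).
Hypothesis hb : 0 < b.
Hypothesis hm : (1 <= m)%nat.

Lemma exp_sigma (x1 x2 : R) : 0 < x1 * x1 + x2 * x2 ->
  exp (Defs.sigma m x1 x2) = conf m x1 x2 * nrm x1 x2.
Proof.
  intros H. unfold Defs.sigma, conf, nrm.
  replace (x1 ^ 2 + x2 ^ 2) with (x1 * x1 + x2 * x2) by ring.
  replace (INR m) with (INR (m - 1) + 1) by (rewrite <- S_INR; f_equal; lia).
  replace ((INR (m - 1) + 1 - / 2) * ln (x1 * x1 + x2 * x2))
    with (INR (m - 1) * ln (x1 * x1 + x2 * x2) + / 2 * ln (x1 * x1 + x2 * x2)) by field.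
  rewrite exp_plus.
  change (exp (INR (m - 1) * ln (x1 * x1 + x2 * x2))) with (Rpower (x1 * x1 + x2 * x2) (INR (m - 1))).
  change (exp (/ 2 * ln (x1 * x1 + x2 * x2))) with (Rpower (x1 * x1 + x2 * x2) (/ 2)).
  rewrite Rpower_pow, Rpower_sqrt by lra. reflexivity.
Qed.

Lemma nrm_pow2 (a1 a2 : R) : sqrt (a1 ^ 2 + a2 ^ 2) = nrm a1 a2.
Proof. unfold nrm. f_equal. ring. Qed.

Lemma beta_eq (x1 x2 y1 y2 : R) : 0 < x1 * x1 + x2 * x2 ->
  beta b m x1 x2 y1 y2 = b * conf m x1 x2 * (x2 * y1 - x1 * y2).
Proof.
  intros H. pose proof (nrm_pos _ _ H).
  unfold beta. rewrite exp_sigma, nrm_pow2 by exact H. field. lra.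
Qed.

Lemma beta_over_alpha (x1 x2 y1 y2 : R) : 0 < x1 * x1 + x2 * x2 -> 0 < y1 * y1 + y2 * y2 ->
  beta b m x1 x2 y1 y2 / alpha m x1 x2 y1 y2 = ratio b x1 x2 y1 y2.
Proof.
  intros Hx Hy. pose proof (nrm_pos _ _ Hx). pose proof (nrm_pos _ _ Hy).
  assert (0 < conf m x1 x2) by (unfold conf; apply pow_lt, Hx).
  unfold beta, alpha, ratio, scale. rewrite exp_sigma, !nrm_pow2 by exact Hx.
  field. repeat split; lra.
Qed.

(* sqrt(b^2 - s^2) = b |x.y| / (|x| |y|), again by Lagrange's identity. *)
Lemma sqrt_gap (x1 x2 y1 y2 : R) : 0 < x1 * x1 + x2 * x2 -> 0 < y1 * y1 + y2 * y2 ->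
  sqrt (b ^ 2 - ratio b x1 x2 y1 y2 ^ 2)
  = b * Rabs (x1 * y1 + x2 * y2) * / nrm x1 x2 * / nrm y1 y2.
Proof.
  intros Hx Hy. pose proof (nrm_pos _ _ Hx). pose proof (nrm_pos _ _ Hy).
  replace (b ^ 2 - ratio b x1 x2 y1 y2 ^ 2)
    with (Rsqr (b * (x1 * y1 + x2 * y2) * / nrm x1 x2 * / nrm y1 y2)).
  - rewrite sqrt_Rsqr_abs, !Rabs_mult, Rabs_pos_eq, !Rabs_inv, !(Rabs_pos_eq (nrm _ _)) by lra.
    reflexivity.
  - assert (Hix : nrm x1 x2 * / nrm x1 x2 = 1) by (field; lra).
    assert (Hiy : nrm y1 y2 * / nrm y1 y2 = 1) by (field; lra).
    assert (HL : (x1 * y1 + x2 * y2) * (x1 * y1 + x2 * y2)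
                 = nrm x1 x2 * nrm x1 x2 * (nrm y1 y2 * nrm y1 y2) - (x2 * y1 - x1 * y2) ^ 2)
      by (rewrite !nrm_sq; ring).
    unfold Rsqr, ratio, scale.
    transitivity (b ^ 2 * (/ nrm x1 x2) ^ 2 * (/ nrm y1 y2) ^ 2
                  * ((x1 * y1 + x2 * y2) * (x1 * y1 + x2 * y2))); [ring|].
    rewrite HL.
    transitivity (b ^ 2 * (nrm x1 x2 * / nrm x1 x2) ^ 2 * (nrm y1 y2 * / nrm y1 y2) ^ 2
                  - (b * / nrm x1 x2 * / nrm y1 y2 * (x2 * y1 - x1 * y2)) ^ 2); [ring|].
    rewrite Hix, Hiy. ring.
Qed.

Lemma Fmetric_eq (x1 x2 y1 y2 : R) : 0 < x1 * x1 + x2 * x2 -> 0 < y1 * y1 + y2 * y2 ->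
  Fmetric b c m x1 x2 y1 y2
  = conf m x1 x2 * Rabs (x1 * y1 + x2 * y2) * profile b c m (ratio b x1 x2 y1 y2).
Proof.
  intros Hx Hy. pose proof (nrm_pos _ _ Hx). pose proof (nrm_pos _ _ Hy).
  unfold Fmetric, phi. rewrite beta_over_alpha, sqrt_gap by assumption.
  fold (integrand b c m). unfold alpha, profile. rewrite exp_sigma, nrm_pow2 by exact Hx.
  field. repeat split; lra.
Qed.

Lemma Fmetric_sq (x1 x2 y1 y2 : R) : x1 * y1 + x2 * y2 <> 0 ->
  Fmetric b c m x1 x2 y1 y2 ^ 2 = ansatz b m (profile b c m) x1 x2 y1 y2 ^ 2.
Proof.
  intros Hd. destruct (nonzero_of_dot _ _ _ _ Hd) as [Hx Hy].
  rewrite Fmetric_eq by assumption. unfold ansatz.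
  rewrite !Rpow_mult_distr, pow2_abs. reflexivity.
Qed.

Lemma domain_dot (x1 x2 y1 y2 : R) : domainF b m x1 x2 y1 y2 -> x1 * y1 + x2 * y2 <> 0.
Proof.
  intros [Hx [Hy Hs]].
  apply (ratio_bound b hb); try apply sum_sq_pos; try assumption.
  rewrite <- beta_over_alpha by (apply sum_sq_pos; assumption). exact Hs.
Qed.

Lemma Fmetric_flat : projectively_flat (domainF b m) (Fmetric b c m).
Proof.
  apply projectively_flat_of_parallel. intros x1 x2 y1 y2 Hdom.
  split; [apply Hdom|].
  apply (ansatz_spray_parallel b m (profile b c m) (profile' b c m) (profile'' b c m));
    auto using profile_derive, profile'_derive, profile_ode, Fmetric_sq, domain_dot.
Qed.

Lemma beta_y1 (x1 x2 y1 y2 : R) : 0 < x1 * x1 + x2 * x2 ->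
  Defs.D 2 (beta b m) x1 x2 y1 y2 = b * conf m x1 x2 * x2.
Proof.
  intros H. apply D_of_is_derive; [lia|].
  apply (is_derive_ext (fun t => b * conf m x1 x2 * (x2 * (y1 + t) - x1 * y2))).
  - intros t. unfold along, kron. simpl. rewrite !Rmult_0_r, !Rmult_1_r, !Rplus_0_r.
    rewrite beta_eq by exact H. reflexivity.
  - auto_derive; [exact I | ring].
Qed.

Lemma beta_y2 (x1 x2 y1 y2 : R) : 0 < x1 * x1 + x2 * x2 ->
  Defs.D 3 (beta b m) x1 x2 y1 y2 = - b * conf m x1 x2 * x1.
Proof.
  intros H. apply D_of_is_derive; [lia|].
  apply (is_derive_ext (fun t => b * conf m x1 x2 * (x2 * y1 - x1 * (y2 + t)))).
  - intros t. unfold along, kron. simpl. rewrite !Rmult_0_r, !Rmult_1_r, !Rplus_0_r.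
    rewrite beta_eq by exact H. reflexivity.
  - auto_derive; [exact I | ring].
Qed.

(* The second partials of beta at x = (1, 0), giving there
   d beta = (b_{2,x^1} - b_{1,x^2}) dx^1 /\ dx^2 = - 2 m b dx^1 /\ dx^2. *)
Lemma dbeta_at_e1 :
  Defs.D 0 (Defs.D 3 (beta b m)) 1 0 0 0 = - b * (2 * INR (m - 1) + 1) /\
  Defs.D 1 (Defs.D 2 (beta b m)) 1 0 0 0 = b.
Proof.
  split; apply D_of_is_derive; try lia; unfold along, kron; simpl.
  - apply (is_derive_ext_loc (fun t => - b * conf m (1 + t) 0 * (1 + t))).
    + generalize (affine_nonzero_near 1 1 ltac:(lra)). apply filter_imp. intros t Ht.
      rewrite !Rmult_0_r, !Rmult_1_r, !Rplus_0_r, beta_y2; [reflexivity|].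
      apply Rsqr_pos_lt in Ht. unfold Rsqr in Ht. lra.
    + unfold conf. auto_derive; [exact I|].
      replace ((1 + 0) * (1 + 0) + 0 * 0) with 1 by ring. rewrite !pow1. ring.
  - apply (is_derive_ext (fun t => b * conf m 1 t * t)).
    + intros t. rewrite !Rmult_0_r, !Rmult_1_r, !Rplus_0_r, Rplus_0_l, beta_y1 by nra.
      reflexivity.
    + unfold conf. auto_derive; [exact I|].
      replace (1 * 1 + 0 * 0) with 1 by ring. rewrite !pow1. ring.
Qed.

Lemma beta_not_closed : ~ closed_form (beta b m).
Proof.
  intros Hclosed.
  assert (He1 : (1, 0) <> (0, 0)) by (intros E; injection E; lra).
  pose proof (Hclosed 1 0 0 0 He1) as Hc. destruct dbeta_at_e1 as [E0 E1].
  rewrite E0, E1 in Hc. pose proof (pos_INR (m - 1)). nra.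
Qed.

End Metric.

Theorem mainTheorem12 (b c : R) (m : nat) (hb : 0 < b) (hm : (1 <= m)%nat) :
  projectively_flat (domainF b m) (Fmetric b c m) /\ ~ closed_form (beta b m).
Proof.
  split.
  - exact (Fmetric_flat b c m hb hm).
  - exact (beta_not_closed b m hb hm).
Qed.
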